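(* Let $\mathfrak{g}_1,\mathfrak{g}_2$ be $S$-algebras such that $f_i(\mathfrak{g}_i)\subset C^1\mathfrak{g}_i$ for every $f_i\in\mathrm{Der}(\mathfrak{g}_i)$, $i=1,2$. Then $\mathfrak{g}_1\underline{\times}\mathfrak{g}_2$ is characteristically nilpotent and $D(\mathfrak{g}_1\underline{\times}\mathfrak{g}_2)\subset C^1(\mathfrak{g}_1\underline{\times}\mathfrak{g}_2)$ for every derivation $D$ of $\mathfrak{g}_1\underline{\times}\mathfrak{g}_2$.
   Context: All Lie algebras are finite-dimensional, complex, nilpotent and nonabelian. $C^1\mathfrak{g}=[\mathfrak{g},\mathfrak{g}]$. A nilpotent $\mathfrak{g}$ is characteristically nilpotent if $\mathfrak{g}^{[m]}=0$ for some $m$, where $\mathfrak{g}^{[1]}=\{f(Y): f\in\mathrm{Der}(\mathfrak{g}),Y\in\mathfrak{g}\}$ and $\mathfrak{g}^{[k]}=\mathrm{Der}(\mathfrak{g})(\mathfrak{g}^{[k-1]})$. Product by generators: for $\mathfrak{g}_1,\mathfrak{g}_2$ of dimensions $m_1,m_2$ take bases $\{X_1,\dots,X_{m_1}\}$, $\{X'_1,\dots,X'_{m_2}\}$ such that $X_1,\dots,X_{n_1}$ generate $\mathfrak{g}_1$ and $X_{n_1+1},\dots,X_{m_1}$ span $C^1\mathfrak{g}_1$, and similarly for $\mathfrak{g}_2$ with $n_2$ generators. $\mathfrak{g}_1\underline{\times}\mathfrak{g}_2$ is the Lie algebra on $\mathfrak{g}_1\oplus\mathfrak{g}_2\oplus\mathfrak{g}_3$,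 $\mathfrak{g}_3=\langle Z_1,\dots,Z_{n_1n_2}\rangle$, with the brackets of $\mathfrak{g}_1$ and of $\mathfrak{g}_2$, $[X_i,X'_j]=Z_{(i-1)n_2+j}$ for $i\le n_1$, $j\le n_2$, $[X_i,X'_j]=0$ otherwise, and $\mathfrak{g}_3$ central. For $D$ a derivation of $\mathfrak{g}_1\underline{\times}\mathfrak{g}_2$ write $D_{21}=p_2D|_{\mathfrak{g}_1}$ with $p_2$ the projection onto $\mathfrak{g}_2$. A nilpotent Lie algebra $\mathfrak{g}_1$ is an $S$-algebra if for every Lie algebra $\mathfrak{g}_2$ and every derivation $D$ of $\mathfrak{g}_1\underline{\times}\mathfrak{g}_2$ one has $D_{21}(\mathfrak{g}_1)\subset C^1\mathfrak{g}_2$. *)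

From HB Require Import structures.
From mathcomp Require Import all_boot all_order all_algebra.
From mathcomp Require Import all_reals complex.
Set Implicit Arguments. Unset Strict Implicit. Unset Printing Implicit Defensive.
Import GRing.Theory.
Local Open Scope ring_scope.

(* A Lie algebra of dimension m over F is modelled on row vectors 'rV[F]_m
   (coordinates w.r.t. a fixed basis e_0,...,e_{m-1} = delta_mx 0 j) with a
   bracket function.  Linear maps are matrices acting on the right: u |-> u *m D. *)
Section LieDefs.
Variable F : fieldType.

Definition is_lie (m : nat) (br : 'rV[F]_m -> 'rV[F]_m -> 'rV[F]_m) : Prop :=
  [/\ (forall (a : F) u u' v, br (a *: u + u') v = a *: br u v + br u' v),
      (forall (a : F) u v v', br u (a *: v + v') = a *: br u v + br u v'),
      (forall u, br u u = 0) &
      (forall u v w, br u (br v w) + br v (br w u) + br w (br u v) = 0)].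

Definition C1 (m : nat) (br : 'rV[F]_m -> 'rV[F]_m -> 'rV[F]_m) : 'M[F]_m :=
  (\sum_(i < m) \sum_(j < m) <<br (delta_mx 0 i) (delta_mx 0 j)>>)%MS.

Fixpoint lcs (m : nat) (br : 'rV[F]_m -> 'rV[F]_m -> 'rV[F]_m) (k : nat) : 'M[F]_m :=
  match k with
  | 0 => 1%:M
  | k'.+1 => (\sum_(i < m) \sum_(j < m) <<br (delta_mx 0 i) (row j (lcs br k'))>>)%MS
  end.

Definition nilpotent (m : nat) (br : 'rV[F]_m -> 'rV[F]_m -> 'rV[F]_m) : Prop :=
  exists k, (lcs br k == (0 : 'M[F]_m))%MS.

Definition nonabelian (m : nat) (br : 'rV[F]_m -> 'rV[F]_m -> 'rV[F]_m) : Prop :=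
  exists u v, br u v != 0.

Definition is_der (m : nat) (br : 'rV[F]_m -> 'rV[F]_m -> 'rV[F]_m) (D : 'M[F]_m) : Prop :=
  forall u v, br u v *m D = br (u *m D) v + br u (v *m D).

Fixpoint gder (m : nat) (br : 'rV[F]_m -> 'rV[F]_m -> 'rV[F]_m) (k : nat) : 'rV[F]_m -> Prop :=
  match k with
  | 0 => fun _ => True
  | k'.+1 => fun u => exists D Z, [/\ is_der br D, gder br k' Z & u = Z *m D]
  end.

Definition char_nilpotent (m : nat) (br : 'rV[F]_m -> 'rV[F]_m -> 'rV[F]_m) : Prop :=
  nilpotent br /\ exists k, forall u, gder br k u -> u = 0.

(* the basis is adapted with n generators: e_0..e_{n-1} generate and
   e_n..e_{m-1} span C^1 g *)
Definition adapted (m : nat) (br : 'rV[F]_m -> 'rV[F]_m -> 'rV[F]_m) (n : nat) : Prop :=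
  (n <= m)%N /\ (C1 br == ((\sum_(j < m | (n <= j)%N) <<(delta_mx 0 j : 'rV[F]_m)>>) : 'M[F]_m))%MS.

(* k-th coordinate (0 if out of range) *)
Definition coef (m : nat) (u : 'rV[F]_m) (k : nat) : F :=
  \sum_(p < m | val p == k) u 0 p.

(* the product by generators g1 x_ g2 on g1 (+) g2 (+) g3, dim g3 = n1*n2,
   with [X_i, X'_j] = Z_{i*n2+j} (0-based) for i < n1, j < n2. *)
Definition gen_prod (m1 m2 : nat) (br1 : 'rV[F]_m1 -> 'rV[F]_m1 -> 'rV[F]_m1)
  (br2 : 'rV[F]_m2 -> 'rV[F]_m2 -> 'rV[F]_m2) (n1 n2 : nat)
  (u v : 'rV[F]_(m1 + m2 + n1 * n2)) : 'rV[F]_(m1 + m2 + n1 * n2) :=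
  let u1 := lsubmx (lsubmx u) in let u2 := rsubmx (lsubmx u) in
  let v1 := lsubmx (lsubmx v) in let v2 := rsubmx (lsubmx v) in
  row_mx (row_mx (br1 u1 v1) (br2 u2 v2))
    (\row_(k < n1 * n2)
       (coef u1 (k %/ n2) * coef v2 (k %% n2) - coef v1 (k %/ n2) * coef u2 (k %% n2))).


Arguments gen_prod {m1 m2} br1 br2 n1 n2 u v.

Definition inj1 (m1 m2 n : nat) (u : 'rV[F]_m1) : 'rV[F]_(m1 + m2 + n) :=
  row_mx (row_mx u 0) 0.
Definition proj2 (m1 m2 n : nat) (w : 'rV[F]_(m1 + m2 + n)) : 'rV[F]_m2 :=
  rsubmx (lsubmx w).
Arguments inj1 {m1} m2 n u.
Arguments proj2 m1 {m2} n w.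

Definition S_algebra (m1 : nat) (br1 : 'rV[F]_m1 -> 'rV[F]_m1 -> 'rV[F]_m1) (n1 : nat) : Prop :=
  forall (m2 n2 : nat) (br2 : 'rV[F]_m2 -> 'rV[F]_m2 -> 'rV[F]_m2),
    is_lie br2 -> nilpotent br2 -> nonabelian br2 -> adapted br2 n2 ->
    forall D : 'M[F]_(m1 + m2 + n1 * n2), is_der (gen_prod br1 br2 n1 n2) D ->
    forall u : 'rV[F]_m1, (proj2 m1 (n1 * n2) (inj1 m2 (n1 * n2) u *m D) <= C1 br2)%MS.

End LieDefs.
Arguments gen_prod {F m1 m2} br1 br2 n1 n2 u v.
Arguments inj1 {F m1} m2 n u.
Arguments proj2 {F} m1 {m2} n w.

(* Write g = g1 (+) g2 (+) g3 for the product by generators, g3 = [g1, g2]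
   being spanned by the brackets [X_i, X'_j].  Let D be a derivation of g.
   Compressing D to g1 (x |-> p1 (D x)) gives a derivation of g1, so
   p1 D(g1) lies in C^1 g1 by hypothesis, while p2 D(g1) lies in C^1 g2
   because g1 is an S-algebra; the same holds for g2 after conjugating D by
   the isomorphism g1 x_ g2 ~ g2 x_ g1.  As g3 lies in C^1 g and derivations
   preserve C^1 g, and as C^1 g contains C^1 g1 (+) C^1 g2 (+) g3, we get
   D(g) in C^1 g.  A derivation with image in C^1 g maps C^k g into
   C^(k+1) g, so g^[k] lies in C^k g, which vanishes for large k since the
   lower central series of g projects onto those of g1 and g2. *)

From HB Require Import structures.
From mathcomp Require Import all_boot all_order all_algebra.
From mathcomp Require Import all_reals complex.
From mathcomp Require Import ring.
Set Implicit Arguments. Unset Strict Implicit. Unset Printing Implicit Defensive.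
Import GRing.Theory.
Local Open Scope ring_scope.

Section RowSpaces.
Variable F : fieldType.

Lemma mul_rV_lin1_linear m n (f : 'rV[F]_m -> 'rV[F]_n) :
  linear f -> forall u, u *m lin1_mx f = f u.
Proof.
move=> fL; exact: (mul_rV_lin1 (HB.pack f (GRing.isLinear.Build F _ _ _ f fL))).
Qed.

Lemma mulmxr_linear m n (A : 'M[F]_(m, n)) : linear (mulmxr A : 'rV[F]_m -> 'rV[F]_n).
Proof. exact: linearP. Qed.

Lemma submx_linear m n p q (f : 'rV[F]_m -> 'rV[F]_n) (S : 'M[F]_(p, m))
    (T : 'M[F]_(q, n)) u :
  linear f -> (forall j, f (row j S) <= T)%MS -> (u <= S)%MS -> (f u <= T)%MS.
Proof.
move=> fL fS uS; rewrite -mul_rV_lin1_linear //; apply: submx_trans (submxMr _ uS) _.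
by apply/row_subP => j; rewrite row_mul mul_rV_lin1_linear.
Qed.

Variable m : nat.
Implicit Types G : 'I_m -> 'I_m -> 'rV[F]_m.

(* Both [C1 br] and [lcs br k.+1] are, by conversion, spans of this form. *)
Definition bispan G : 'M[F]_m := (\sum_(i < m) \sum_(j < m) <<G i j>>)%MS.

Lemma bispan_sup G i j : (G i j <= bispan G)%MS.
Proof. by apply: (sumsmx_sup i) => //; apply: (sumsmx_sup j) => //; rewrite genmxE. Qed.

Lemma bispan_sub G n (S : 'M[F]_(n, m)) : (forall i j, G i j <= S)%MS -> (bispan G <= S)%MS.
Proof.
by move=> GS; apply/sumsmx_subP => i _; apply/sumsmx_subP => j _; rewrite genmxE.
Qed.

Lemma bispan_sub_linear n p (f : 'rV[F]_m -> 'rV[F]_n) (S : 'M[F]_(p, n)) G u :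
  linear f -> (forall i j, f (G i j) <= S)%MS -> (u <= bispan G)%MS -> (f u <= S)%MS.
Proof.
move=> fL fG uG; rewrite -mul_rV_lin1_linear //; apply: submx_trans (submxMr _ uG) _.
rewrite sumsmxMr_gen; apply/sumsmx_subP => i _; rewrite genmxE sumsmxMr_gen.
apply/sumsmx_subP => j _; rewrite genmxE.
have genG : (<<G i j>> <= G i j)%MS by rewrite genmxE.
by apply: submx_trans (submxMr _ genG) _; rewrite mul_rV_lin1_linear.
Qed.

End RowSpaces.

Section LieAlgebra.
Variables (F : fieldType) (m : nat) (br : 'rV[F]_m -> 'rV[F]_m -> 'rV[F]_m).
Hypothesis br_lie : is_lie br.

Implicit Types u v w x y : 'rV[F]_m.
Local Notation e i := (delta_mx 0 i : 'rV[F]_m).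

Lemma br_linearl v : linear (br^~ v).
Proof. by case: br_lie => brl _ _ _ a u u'; apply: brl. Qed.

Lemma br_linearr u : linear (br u).
Proof. by case: br_lie => _ brr _ _ a v v'; apply: brr. Qed.

Lemma brDl u u' v : br (u + u') v = br u v + br u' v.
Proof. by have := br_linearl v 1 u u'; rewrite !scale1r. Qed.

Lemma brDr u v v' : br u (v + v') = br u v + br u v'.
Proof. by have := br_linearr u 1 v v'; rewrite !scale1r. Qed.

Lemma br0l v : br 0 v = 0.
Proof. by apply: (addrI (br 0 v)); rewrite -brDl !addr0. Qed.

Lemma br0r u : br u 0 = 0.
Proof. by apply: (addrI (br u 0)); rewrite -brDr !addr0. Qed.

Lemma br_anti u v : br u v = - br v u.
Proof.
case: br_lie => _ _ brii _; apply/eqP; rewrite -addr_eq0; apply/eqP.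
by have := brii (u + v); rewrite brDl !brDr !brii add0r addr0.
Qed.

Lemma br_jacobi_l u v w : br (br u v) w = br u (br v w) + br v (br w u).
Proof.
case: br_lie => _ _ _ jacobi; apply/eqP; rewrite br_anti eq_sym -addr_eq0.
by apply/eqP; apply: jacobi.
Qed.

Lemma lcs1 : lcs br 1 = C1 br.
Proof. by apply: eq_bigr => i _; apply: eq_bigr => j _; rewrite row1. Qed.

Lemma br_lcs k x y : (y <= lcs br k)%MS -> (br x y <= lcs br k.+1)%MS.
Proof.
apply: submx_linear (br_linearr x) _ => j.
apply: (submx_linear (f := br^~ _) (S := 1%:M)) (br_linearl _) _ (submx1 x) => i.
by rewrite row1 (bispan_sup (fun i j => br (e i) (row j (lcs br k)))).
Qed.

Lemma br_C1 x y : (br x y <= C1 br)%MS.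
Proof. by rewrite -lcs1; apply: br_lcs; apply: submx1. Qed.

Lemma lcs_subS k : (lcs br k.+1 <= lcs br k)%MS.
Proof.
elim: k => [|k IH]; first exact: submx1.
by apply: bispan_sub => i j; apply: br_lcs; apply: submx_trans (row_sub _ _) IH.
Qed.

Lemma lcs_sub_leq k l : (k <= l)%N -> (lcs br l <= lcs br k)%MS.
Proof.
move/subnK <-; elim: (l - k)%N => [|d IH]; first exact: submx_refl.
by apply: submx_trans (lcs_subS _) IH.
Qed.

Lemma br_lcs_lcs i j x y : (x <= lcs br i)%MS -> (y <= lcs br j)%MS ->
  (br x y <= lcs br (i + j).+1)%MS.
Proof.
elim: i j x y => [|i IH] j x y xi yj; first exact: br_lcs.
apply: bispan_sub_linear (br_linearl y) _ xi => a b.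
have rb : (row b (lcs br i) <= lcs br i)%MS by apply: row_sub.
rewrite br_jacobi_l addmx_sub //; first by apply: br_lcs; apply: IH.
rewrite addSn -addnS; apply: IH rb _.
by rewrite br_anti eqmx_opp; apply: br_lcs.
Qed.

Section Derivation.
Variable D : 'M[F]_m.
Hypothesis D_der : is_der br D.

Lemma der_C1 u : (u <= C1 br)%MS -> (u *m D <= C1 br)%MS.
Proof.
apply: bispan_sub_linear (mulmxr_linear D) _ => i j.
by rewrite [mulmxr _ _]/= D_der addmx_sub ?br_C1.
Qed.

Hypothesis D_C1 : forall u, (u *m D <= C1 br)%MS.

Lemma der_lcs k u : (u <= lcs br k)%MS -> (u *m D <= lcs br k.+1)%MS.
Proof.
elim: k u => [|k IH] u uk; first by rewrite lcs1.
apply: bispan_sub_linear (mulmxr_linear D) _ uk => i j.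
rewrite [mulmxr _ _]/= D_der addmx_sub //.
  by apply: (@br_lcs_lcs 1); rewrite ?lcs1 ?row_sub.
by apply: br_lcs; apply: IH; apply: row_sub.
Qed.

End Derivation.

Lemma gder_sub_lcs : (forall D, is_der br D -> forall u, u *m D <= C1 br)%MS ->
  forall k u, gder br k u -> (u <= lcs br k)%MS.
Proof.
move=> D_C1 k; elim: k => [|k IH] u /= => [_|]; first exact: submx1.
by case=> D [Z [D_der /IH Zk ->]]; apply: der_lcs => //; apply: D_C1.
Qed.

Lemma char_nilpotent_of_der_C1 : nilpotent br ->
  (forall D, is_der br D -> forall u, u *m D <= C1 br)%MS -> char_nilpotent br.
Proof.
move=> [k lcs0] D_C1; split; first by exists k.
exists k => u /(gder_sub_lcs D_C1) uk; apply/eqP; rewrite -submx0.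
by apply: submx_trans uk _; case/andP: lcs0.
Qed.

End LieAlgebra.

Section Coordinates.
Variable F : fieldType.

Lemma coefP m a (u v : 'rV[F]_m) k : coef (a *: u + v) k = a * coef u k + coef v k.
Proof. by rewrite /coef mulr_sumr -big_split; apply: eq_bigr => i _; rewrite !mxE. Qed.

Lemma coef0 m k : coef (0 : 'rV[F]_m) k = 0.
Proof. by rewrite /coef big1 // => i _; rewrite mxE. Qed.

Lemma coef_delta m (i : 'I_m) k : coef (delta_mx 0 i : 'rV[F]_m) k = (val i == k)%:R.
Proof.
rewrite /coef; case: (ltnP k m) => [km | mk].
  rewrite (bigD1 (Ordinal km)) //= big1 ?addr0; first by rewrite mxE eqxx eq_sym.
  by move=> j /andP [/eqP jk /eqP []]; apply: val_inj.
rewrite big1 => [|j /eqP jk]; last by move: (ltn_ord j); rewrite jk ltnNge mk.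
by case: eqP => // ik; move: (ltn_ord i); rewrite ik ltnNge mk.
Qed.

Lemma coef_br_generator m (br : 'rV[F]_m -> 'rV[F]_m -> 'rV[F]_m) n x y a :
  is_lie br -> adapted br n -> (a < n)%N -> coef (br x y) a = 0.
Proof.
move=> br_lie [_ /andP [C1_sub _]] an.
have /sub_sums_genmxP [c ->] := submx_trans (br_C1 br_lie x y) C1_sub.
rewrite /coef big1 // => p /eqP pa; rewrite summxE big1 // => j nj.
rewrite mxE big_ord1 mxE /=.
suff /negbTE -> : p != j by rewrite mulr0.
by apply: contraTneq nj => <-; rewrite -ltnNge pa.
Qed.

End Coordinates.

Section Blocks.
Variables (F : fieldType) (m1 m2 n : nat).
Local Notation V := 'rV[F]_(m1 + m2 + n).
Implicit Types w : V.

Definition proj1 w : 'rV[F]_m1 := lsubmx (lsubmx w).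
Definition proj3 w : 'rV[F]_n := rsubmx w.
Definition inj2 (x : 'rV[F]_m2) : V := row_mx (row_mx 0 x) 0.
Definition inj3 (z : 'rV[F]_n) : V := row_mx 0 z.

Fact proj1_is_linear : linear proj1. Proof. by move=> a u v; rewrite /proj1 !linearP. Qed.
Fact proj2_is_linear : linear (proj2 m1 n : V -> _).
Proof. by move=> a u v; rewrite /proj2 !linearP. Qed.
Fact proj3_is_linear : linear proj3. Proof. by move=> a u v; rewrite /proj3 !linearP. Qed.
Fact inj1_is_linear : linear (inj1 m2 n : _ -> V).
Proof. by move=> a u v; rewrite /inj1 !(scale_row_mx, add_row_mx) !(scaler0, addr0). Qed.
Fact inj2_is_linear : linear inj2.
Proof. by move=> a u v; rewrite /inj2 !(scale_row_mx, add_row_mx) !(scaler0, addr0). Qed.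
Fact inj3_is_linear : linear inj3.
Proof. by move=> a u v; rewrite /inj3 !(scale_row_mx, add_row_mx) !(scaler0, addr0). Qed.

HB.instance Definition _ := GRing.isLinear.Build F V _ _ proj1 proj1_is_linear.
HB.instance Definition _ := GRing.isLinear.Build F V _ _ (proj2 m1 n) proj2_is_linear.
HB.instance Definition _ := GRing.isLinear.Build F V _ _ proj3 proj3_is_linear.
HB.instance Definition _ := GRing.isLinear.Build F _ V _ (inj1 m2 n) inj1_is_linear.
HB.instance Definition _ := GRing.isLinear.Build F _ V _ inj2 inj2_is_linear.
HB.instance Definition _ := GRing.isLinear.Build F _ V _ inj3 inj3_is_linear.

Lemma eq_blocks w w' :
  proj1 w = proj1 w' -> proj2 m1 n w = proj2 m1 n w' -> proj3 w = proj3 w' -> w = w'.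
Proof.
rewrite /proj1 /proj2 /proj3 => eq1 eq2 eq3.
rewrite -[w]hsubmxK -[w']hsubmxK eq3 -[lsubmx w]hsubmxK -[lsubmx w']hsubmxK.
by rewrite eq1 eq2.
Qed.

Section ProjInj.
Variables (x : 'rV[F]_m1) (y : 'rV[F]_m2) (z : 'rV[F]_n).
Lemma proj1_inj1 : proj1 (inj1 m2 n x) = x. Proof. by rewrite /proj1 !row_mxKl. Qed.
Lemma proj2_inj1 : proj2 m1 n (inj1 m2 n x) = 0.
Proof. by rewrite /proj2 row_mxKl row_mxKr. Qed.
Lemma proj3_inj1 : proj3 (inj1 m2 n x) = 0. Proof. by rewrite /proj3 row_mxKr. Qed.
Lemma proj1_inj2 : proj1 (inj2 y) = 0. Proof. by rewrite /proj1 !row_mxKl. Qed.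
Lemma proj2_inj2 : proj2 m1 n (inj2 y) = y. Proof. by rewrite /proj2 row_mxKl row_mxKr. Qed.
Lemma proj3_inj2 : proj3 (inj2 y) = 0. Proof. by rewrite /proj3 row_mxKr. Qed.
Lemma proj1_inj3 : proj1 (inj3 z) = 0. Proof. by rewrite /proj1 row_mxKl linear0. Qed.
Lemma proj2_inj3 : proj2 m1 n (inj3 z) = 0. Proof. by rewrite /proj2 row_mxKl linear0. Qed.
Lemma proj3_inj3 : proj3 (inj3 z) = z. Proof. by rewrite /proj3 row_mxKr. Qed.
End ProjInj.

Definition proj_injE := (proj1_inj1, proj2_inj1, proj3_inj1, proj1_inj2, proj2_inj2,
  proj3_inj2, proj1_inj3, proj2_inj3, proj3_inj3).

Lemma block_decomp w : w = inj1 m2 n (proj1 w) + inj2 (proj2 m1 n w) + inj3 (proj3 w).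
Proof. by apply: eq_blocks; rewrite !linearD /= !proj_injE ?addr0 ?add0r. Qed.

End Blocks.
Arguments proj1 {F m1 m2 n} w.
Arguments proj3 {F m1 m2 n} w.
Arguments inj2 {F} m1 {m2} n x.
Arguments inj3 {F} m1 m2 {n} z.
Arguments proj1_is_linear {F m1 m2 n}.
Arguments proj2_is_linear {F m1 m2 n}.
Arguments inj1_is_linear {F m1 m2 n}.
Arguments inj2_is_linear {F m1 m2 n}.
Arguments inj3_is_linear {F m1 m2 n}.

Lemma ord_mul_divn_modn n1 n2 (k : 'I_(n1 * n2)) : (k %/ n2 < n1)%N /\ (k %% n2 < n2)%N.
Proof.
have n2_gt0 : (0 < n2)%N by case: n2 k => [[j]|//]; rewrite muln0.
by rewrite ltn_divLR // ltn_pmod.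
Qed.

Section GenProd.
Variables (F : fieldType) (m1 m2 n1 n2 : nat).
Variable br1 : 'rV[F]_m1 -> 'rV[F]_m1 -> 'rV[F]_m1.
Variable br2 : 'rV[F]_m2 -> 'rV[F]_m2 -> 'rV[F]_m2.
Local Notation g := (gen_prod br1 br2 n1 n2).
Local Notation N := (n1 * n2)%N.
Local Notation proj2 := (proj2 m1 N).
Local Notation inj1 := (inj1 m2 N).
Local Notation inj2 := (inj2 m1 N).
Local Notation inj3 := (inj3 m1 m2).
Implicit Types u v w : 'rV[F]_(m1 + m2 + N).

Lemma proj1_gen_prod u v : proj1 (g u v) = br1 (proj1 u) (proj1 v).
Proof. by rewrite /proj1 !row_mxKl. Qed.

Lemma proj2_gen_prod u v : proj2 (g u v) = br2 (proj2 u) (proj2 v).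
Proof. by rewrite /proj2 /= row_mxKl row_mxKr. Qed.

Lemma proj3_gen_prod u v : proj3 (g u v) = \row_(k < N)
  (coef (proj1 u) (k %/ n2) * coef (proj2 v) (k %% n2)
   - coef (proj1 v) (k %/ n2) * coef (proj2 u) (k %% n2)).
Proof. by rewrite /proj3 row_mxKr. Qed.

Definition gen_prodE := (proj1_gen_prod, proj2_gen_prod, proj3_gen_prod).

Hypotheses (br1_lie : is_lie br1) (br2_lie : is_lie br2).

Lemma gen_prod_inj1 x y : g (inj1 x) (inj1 y) = inj1 (br1 x y).
Proof.
apply: eq_blocks; rewrite !gen_prodE !proj_injE ?br0l //.
by apply/rowP => k; rewrite !mxE !coef0 !mulr0 subrr.
Qed.

Lemma gen_prod_inj2 x y : g (inj2 x) (inj2 y) = inj2 (br2 x y).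
Proof.
apply: eq_blocks; rewrite !gen_prodE !proj_injE ?br0l //.
by apply/rowP => k; rewrite !mxE !coef0 !mul0r subrr.
Qed.

Hypotheses (adapted1 : adapted br1 n1) (adapted2 : adapted br2 n2).

Lemma is_lie_gen_prod : is_lie g.
Proof.
case: br1_lie => lin1 lin1r alt1 _; case: br2_lie => lin2 lin2r alt2 _.
split.
- move=> a u u' v; apply: eq_blocks; rewrite !(linearD, linearZ) /= !gen_prodE.
  + by rewrite !(linearD, linearZ) /= lin1.
  + by rewrite !(linearD, linearZ) /= lin2.
  by apply/rowP => k; rewrite !mxE !(linearD, linearZ) /= !coefP; ring.
- move=> a u v v'; apply: eq_blocks; rewrite !(linearD, linearZ) /= !gen_prodE.
  + by rewrite !(linearD, linearZ) /= lin1r.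
  + by rewrite !(linearD, linearZ) /= lin2r.
  by apply/rowP => k; rewrite !mxE !(linearD, linearZ) /= !coefP; ring.
- move=> u; apply: eq_blocks; rewrite !gen_prodE !linear0 ?alt1 ?alt2 //.
  by apply/rowP => k; rewrite !mxE subrr.
- move=> u v w; apply: eq_blocks; rewrite !linearD /= !gen_prodE !linear0.
  + by case: br1_lie => _ _ _ ->.
  + by case: br2_lie => _ _ _ ->.
  (* The g3-part of a double bracket only reads generator coordinates of
     brackets, and these vanish in an adapted basis. *)
  apply/rowP => k; have [k1 k2] := ord_mul_divn_modn k; rewrite !mxE.
  rewrite !(coef_br_generator _ _ br1_lie adapted1 k1).
  by rewrite !(coef_br_generator _ _ br2_lie adapted2 k2) !mulr0 !mul0r !subrr !addr0.
Qed.

Lemma inj3_delta_gen_prod (k : 'I_N) : exists a b,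
  inj3 (delta_mx 0 k) = g (inj1 (delta_mx 0 a)) (inj2 (delta_mx 0 b)).
Proof.
have [k1 k2] := ord_mul_divn_modn k.
have [[n1m1 _] [n2m2 _]] := (adapted1, adapted2).
exists (Ordinal (leq_trans k1 n1m1)), (Ordinal (leq_trans k2 n2m2)).
apply: eq_blocks; rewrite !gen_prodE !proj_injE ?br0l ?br0r //.
apply/rowP => j; rewrite !mxE !coef0 mulr0 subr0 !coef_delta -natrM mulnb /=.
congr (_%:R); congr (nat_of_bool _); apply/eqP/andP => [-> | [/eqP jk1 /eqP jk2]].
  by split.
by apply: val_inj; rewrite /= (divn_eq j n2) (divn_eq k n2) jk1 jk2.
Qed.

Lemma gen_prod_sub_C1 w : (proj1 w <= C1 br1)%MS -> (proj2 w <= C1 br2)%MS ->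
  (w <= C1 g)%MS.
Proof.
move=> w1 w2; have g_lie := is_lie_gen_prod.
rewrite [w]block_decomp !addmx_sub //.
- apply: (bispan_sub_linear inj1_is_linear) w1 => i j.
  by rewrite -gen_prod_inj1 br_C1.
- apply: (bispan_sub_linear inj2_is_linear) w2 => i j.
  by rewrite -gen_prod_inj2 br_C1.
apply: (submx_linear inj3_is_linear) (submx1 _) => k.
by rewrite row1; have [a [b ->]] := inj3_delta_gen_prod k; apply: br_C1.
Qed.

Lemma lcs_gen_prod_proj k w : (w <= lcs g k)%MS ->
  (proj1 w <= lcs br1 k)%MS /\ (proj2 w <= lcs br2 k)%MS.
Proof.
elim: k w => [|k IH] w wk; first by rewrite !submx1.
have IHj j := IH _ (row_sub j (lcs g k)).
split; [apply: (bispan_sub_linear proj1_is_linear) wk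
       | apply: (bispan_sub_linear proj2_is_linear) wk];
  by move=> i j; rewrite gen_prodE; apply: br_lcs; case: (IHj j).
Qed.

Lemma nilpotent_gen_prod : nilpotent br1 -> nilpotent br2 -> nilpotent g.
Proof.
move=> [k1 /andP [lcs1_0 _]] [k2 /andP [lcs2_0 _]].
exists (k1 + k2).+1; rewrite sub0mx andbT; apply: bispan_sub => i j.
set r := row j _; have [r1 r2] := lcs_gen_prod_proj (row_sub j (lcs g (k1 + k2))).
have r1_0 : proj1 r = 0.
  apply/eqP; rewrite -submx0 (submx_trans r1) //.
  by rewrite (submx_trans _ lcs1_0) ?lcs_sub_leq ?leq_addr.
have r2_0 : proj2 r = 0.
  apply/eqP; rewrite -submx0 (submx_trans r2) //.
  by rewrite (submx_trans _ lcs2_0) ?lcs_sub_leq ?leq_addl.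
suff -> : g (delta_mx 0 i) r = 0 by apply: sub0mx.
apply: eq_blocks; rewrite !gen_prodE ?r1_0 ?r2_0 ?br0r ?linear0 //.
by apply/rowP => k; rewrite !mxE !coef0 mulr0 mul0r subrr.
Qed.

End GenProd.

Section TransposeIndex.
Variables n1 n2 : nat.

Lemma tr_index_subproof (k : 'I_(n2 * n1)) : ((k %% n1) * n2 + k %/ n1 < n1 * n2)%N.
Proof.
have [k1 k2] := ord_mul_divn_modn k.
apply: (@leq_trans ((k %% n1).+1 * n2)); first by rewrite mulSn addnC ltn_add2r.
by rewrite leq_mul2r k2 orbT.
Qed.

Definition tr_index (k : 'I_(n2 * n1)) : 'I_(n1 * n2) := Ordinal (tr_index_subproof k).

Lemma tr_index_div k : (tr_index k %/ n2 = k %% n1)%N.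
Proof.
have [k1 k2] := ord_mul_divn_modn k.
have n2_gt0 : (0 < n2)%N := leq_ltn_trans (leq0n _) k1.
by rewrite /= divnMDl // divn_small // addn0.
Qed.

Lemma tr_index_mod k : (tr_index k %% n2 = k %/ n1)%N.
Proof. by have [k1 _] := ord_mul_divn_modn k; rewrite /= modnMDl modn_small. Qed.

End TransposeIndex.

Lemma tr_indexK n1 n2 : cancel (@tr_index n1 n2) (@tr_index n2 n1).
Proof. by move=> k; apply: val_inj; rewrite /= tr_index_div tr_index_mod -divn_eq. Qed.

Section Swap.
Variables (F : fieldType) (m1 m2 n1 n2 : nat).
Implicit Types w : 'rV[F]_(m1 + m2 + n1 * n2).

(* The isomorphism g1 x_ g2 -> g2 x_ g1: the central coordinate
   Z_(i n2 + j) = [X_i, X'_j] = - [X'_j, X_i] is sent to minus the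
   coordinate of index j n1 + i. *)
Definition swap w : 'rV[F]_(m2 + m1 + n2 * n1) :=
  row_mx (row_mx (proj2 m1 (n1 * n2) w) (proj1 w)) (\row_k - proj3 w 0 (tr_index k)).

Lemma proj1_swap w : proj1 (swap w) = proj2 m1 (n1 * n2) w.
Proof. by rewrite /proj1 !row_mxKl. Qed.

Lemma proj2_swap w : proj2 m2 (n2 * n1) (swap w) = proj1 w.
Proof. by rewrite /proj2 row_mxKl row_mxKr. Qed.

Lemma proj3_swap w : proj3 (swap w) = \row_k - proj3 w 0 (tr_index k).
Proof. by rewrite /proj3 row_mxKr. Qed.

Definition swapE := (proj1_swap, proj2_swap, proj3_swap).

Fact swap_is_linear : linear swap.
Proof.
move=> a w w'; apply: eq_blocks; rewrite !(linearD, linearZ) /= !swapE.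
- by rewrite !(linearD, linearZ).
- by rewrite !(linearD, linearZ).
by apply/rowP => k; rewrite !(linearD, linearZ) /= !mxE; ring.
Qed.

HB.instance Definition _ := GRing.isLinear.Build F _ _ _ swap swap_is_linear.

Lemma swap_inj1 x : swap (inj1 m2 (n1 * n2) x) = inj2 m2 (n2 * n1) x.
Proof.
apply: eq_blocks; rewrite !swapE !proj_injE //.
by apply/rowP => k; rewrite !mxE oppr0.
Qed.

Lemma swap_gen_prod br1 br2 u v :
  swap (gen_prod br1 br2 n1 n2 u v) = gen_prod br2 br1 n2 n1 (swap u) (swap v).
Proof.
apply: eq_blocks; rewrite !gen_prodE !swapE ?gen_prodE //.
by apply/rowP => k; rewrite !mxE tr_index_div tr_index_mod; ring.
Qed.

End Swap.
Arguments swap {F m1 m2 n1 n2} w.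

Lemma swapK F m1 m2 n1 n2 : cancel (@swap F m1 m2 n1 n2) swap.
Proof.
move=> w; apply: eq_blocks; rewrite !swapE //.
by apply/rowP => k; rewrite !mxE opprK tr_indexK.
Qed.

Section ProductDerivation.
Variables (F : fieldType) (m1 m2 n1 n2 : nat).
Variable br1 : 'rV[F]_m1 -> 'rV[F]_m1 -> 'rV[F]_m1.
Variable br2 : 'rV[F]_m2 -> 'rV[F]_m2 -> 'rV[F]_m2.
Local Notation g := (gen_prod br1 br2 n1 n2).
Local Notation N := (n1 * n2)%N.
Variable D : 'M[F]_(m1 + m2 + N).
Hypothesis D_der : is_der g D.

Lemma is_der_swap :
  is_der (gen_prod br2 br1 n2 n1) (lin1_mx (swap \o mulmxr D \o swap)).
Proof.
move=> u v; rewrite !mul_rV_lin1 /= swap_gen_prod D_der linearD /=.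
by rewrite !swap_gen_prod !swapK.
Qed.

Lemma is_der_proj1_inj1 :
  is_lie br2 -> is_der br1 (lin1_mx (proj1 \o mulmxr D \o inj1 m2 N)).
Proof.
move=> br2_lie x y; rewrite !mul_rV_lin1 /= -(gen_prod_inj1 n1 n2 br1 br2_lie).
by rewrite D_der linearD /= !proj1_gen_prod !proj1_inj1.
Qed.

Lemma der_inj1_sub_C1 :
    is_lie br2 -> nilpotent br2 -> nonabelian br2 -> adapted br2 n2 ->
    S_algebra br1 n1 ->
    (forall f, is_der br1 f -> forall x : 'rV_m1, x *m f <= C1 br1)%MS ->
  forall x, (proj1 (inj1 m2 N x *m D) <= C1 br1)%MS /\
            (proj2 m1 N (inj1 m2 N x *m D) <= C1 br2)%MS.
Proof.
move=> br2_lie br2_nil br2_nonab br2_adapted S1 der1 x; split.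
  by have := der1 _ (is_der_proj1_inj1 br2_lie) x; rewrite mul_rV_lin1.
exact: S1 br2_lie br2_nil br2_nonab br2_adapted D D_der x.
Qed.

End ProductDerivation.

Section ProductOfSAlgebras.
Variables (F : fieldType) (m1 n1 m2 n2 : nat).
Variable br1 : 'rV[F]_m1 -> 'rV[F]_m1 -> 'rV[F]_m1.
Variable br2 : 'rV[F]_m2 -> 'rV[F]_m2 -> 'rV[F]_m2.
Hypotheses (br1_lie : is_lie br1) (br1_nil : nilpotent br1).
Hypotheses (br1_nonab : nonabelian br1) (br1_adapted : adapted br1 n1).
Hypotheses (br2_lie : is_lie br2) (br2_nil : nilpotent br2).
Hypotheses (br2_nonab : nonabelian br2) (br2_adapted : adapted br2 n2).
Hypotheses (S1 : S_algebra br1 n1) (S2 : S_algebra br2 n2).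
Hypothesis der1 : forall f, is_der br1 f -> forall x : 'rV_m1, (x *m f <= C1 br1)%MS.
Hypothesis der2 : forall f, is_der br2 f -> forall x : 'rV_m2, (x *m f <= C1 br2)%MS.
Local Notation g := (gen_prod br1 br2 n1 n2).

Lemma der_gen_prod_sub_C1 D :
  is_der g D -> forall u : 'rV_(m1 + m2 + n1 * n2), (u *m D <= C1 g)%MS.
Proof.
move=> D_der u; have g_lie := is_lie_gen_prod br1_lie br2_lie br1_adapted br2_adapted.
rewrite [u]block_decomp !mulmxDl !addmx_sub //.
- have := der_inj1_sub_C1 D_der br2_lie br2_nil br2_nonab br2_adapted.
  by case/(_ S1 der1 (proj1 u)); apply: gen_prod_sub_C1.
- (* The g2-part of D is the g1-part of its conjugate by swap. *)
  have := der_inj1_sub_C1 (is_der_swap D_der) br1_lie br1_nil br1_nonab br1_adapted.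
  case/(_ S2 der2 (proj2 _ _ u)); rewrite !mul_rV_lin1 /= swap_inj1 proj1_swap proj2_swap.
  by move=> u2 u1; apply: gen_prod_sub_C1.
by apply: der_C1 => //; apply: gen_prod_sub_C1 => //; rewrite proj_injE sub0mx.
Qed.

End ProductOfSAlgebras.

Theorem mainTheorem12 (R : realType) (m1 n1 m2 n2 : nat)
  (br1 : 'rV[R[i]]_m1 -> 'rV[R[i]]_m1 -> 'rV[R[i]]_m1)
  (br2 : 'rV[R[i]]_m2 -> 'rV[R[i]]_m2 -> 'rV[R[i]]_m2) :
  is_lie br1 -> nilpotent br1 -> nonabelian br1 -> adapted br1 n1 ->
  is_lie br2 -> nilpotent br2 -> nonabelian br2 -> adapted br2 n2 ->
  S_algebra br1 n1 -> S_algebra br2 n2 ->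
  (forall f : 'M[R[i]]_m1, is_der br1 f -> forall u : 'rV[R[i]]_m1, (u *m f <= C1 br1)%MS) ->
  (forall f : 'M[R[i]]_m2, is_der br2 f -> forall u : 'rV[R[i]]_m2, (u *m f <= C1 br2)%MS) ->
  char_nilpotent (gen_prod br1 br2 n1 n2) /\
  (forall D : 'M[R[i]]_(m1 + m2 + n1 * n2), is_der (gen_prod br1 br2 n1 n2) D ->
     forall u : 'rV[R[i]]_(m1 + m2 + n1 * n2), (u *m D <= C1 (gen_prod br1 br2 n1 n2))%MS).
Proof.
move=> lie1 nil1 nonab1 adapted1 lie2 nil2 nonab2 adapted2 S1 S2 der1 der2.
have D_C1 := der_gen_prod_sub_C1 lie1 nil1 nonab1 adapted1 lie2 nil2 nonab2 adapted2
  S1 S2 der1 der2.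
split=> //; apply: char_nilpotent_of_der_C1 => //.
  exact: is_lie_gen_prod.
exact: nilpotent_gen_prod.
Qed.
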